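(* There exists a function $f:\mathbb{N}\to\mathbb{R}$ with $f(n)/n^3\to0$ as $n\to\infty$ such that the following holds. Let $n$ and $\rho$ be positive integers with $\rho<n/2$, and let $k=\lfloor n/2\rfloor$. Let $s_1,\ldots,s_k$ be nonnegative real numbers satisfying $s_1+\ldots+s_k\leqslant\rho$. Then $$\varphi(s_1,\ldots,s_k):=\sum_{r=\rho}^{k}\min\left\{\frac{r^2}{4},\,1s_1+2s_2+\ldots+rs_r\right\}\leqslant\frac{15\,625\,n^3}{1\,597\,536}+f(n).$$ *)

From Stdlib Require Import Reals Lra Lia.
Open Scope R_scope.

(* sum_{i=m}^{n} f i  (empty, i.e. 0, when n < m) *)
Fixpoint sum_range (f : nat -> R) (m len : nat) : R :=
  match len with
  | O => 0
  | S l => f m + sum_range f (S m) l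
  end.

Definition sum_from_to (f : nat -> R) (m n : nat) : R :=
  sum_range f m (S n - m).

Definition phi (n rho : nat) (s : nat -> R) : R :=
  sum_from_to
    (fun r => Rmin (INR r ^ 2 / 4)
                   (sum_from_to (fun i => INR i * s i) 1 r))
    rho (Nat.div2 n).

(* Weak LP duality.  For weights 0 <= w_r <= 1 we have
   min (r^2/4) S_r <= (1 - w_r) r^2/4 + w_r S_r  with  S_r = sum_{i<=r} i s_i,
   and exchanging the order of summation, sum_r w_r S_r = sum_i i s_i W_i where W_i
   is the w-mass of [max i rho, k].  So if j W_j <= C for every j >= rho, the second
   part is at most rho C, because sum_i s_i <= rho.  The constant weights w = 0 and
   w = 1 suffice when rho >= 2k/5 or rho <= 5k/16 (and for small k).  In between take
   w_r = M / r^2 up to the cut B = floor (125k/129) and w_r = 1 beyond it, with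
   M = (k - B)(B + 1/2); optimizing the resulting cubic bound gives
   125000/1597536 k^3 + O(k^2), i.e. 15625/1597536 n^3 + O(n^2) since 2k <= n. *)

From Stdlib Require Import Reals Lra Lia.
Open Scope R_scope.

Lemma sum_range_ext f g m len :
  (forall i, (m <= i < m + len)%nat -> f i = g i) ->
  sum_range f m len = sum_range g m len.
Proof.
  revert m; induction len as [|len IH]; intros m H; simpl; [reflexivity|].
  rewrite H by lia. rewrite (IH (S m)) by (intros; apply H; lia). reflexivity.
Qed.

Lemma sum_range_le f g m len :
  (forall i, (m <= i < m + len)%nat -> f i <= g i) ->
  sum_range f m len <= sum_range g m len.
Proof.
  revert m; induction len as [|len IH]; intros m H; simpl; [lra|].
  apply Rplus_le_compat; [apply H; lia | apply IH; intros; apply H; lia].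
Qed.

Lemma sum_range_plus f g m len :
  sum_range (fun i => f i + g i) m len = sum_range f m len + sum_range g m len.
Proof. revert m; induction len as [|len IH]; intros m; simpl; [lra|]. rewrite IH; lra. Qed.

Lemma sum_range_scal_l c f m len :
  sum_range (fun i => c * f i) m len = c * sum_range f m len.
Proof. revert m; induction len as [|len IH]; intros m; simpl; [lra|]. rewrite IH; lra. Qed.

Lemma sum_range_const c m len : sum_range (fun _ => c) m len = INR len * c.
Proof.
  revert m; induction len as [|len IH]; intros m; simpl sum_range; [simpl; lra|].
  rewrite IH, S_INR; lra.
Qed.

Lemma sum_range_split f m a b :
  sum_range f m (a + b) = sum_range f m a + sum_range f (m + a) b.
Proof.
  revert m; induction a as [|a IH]; intros m; simpl.
  - rewrite Nat.add_0_r; lra.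
  - rewrite IH. replace (m + S a)%nat with (S m + a)%nat by lia. lra.
Qed.

Lemma sum_range_nonneg f m len :
  (forall i, (m <= i < m + len)%nat -> 0 <= f i) -> 0 <= sum_range f m len.
Proof.
  intros H. apply Rle_trans with (sum_range (fun _ => 0) m len).
  - rewrite sum_range_const; lra.
  - now apply sum_range_le.
Qed.

Lemma sum_range_swap (F : nat -> nat -> R) m1 len1 m2 len2 :
  sum_range (fun r => sum_range (F r) m2 len2) m1 len1 =
  sum_range (fun i => sum_range (fun r => F r i) m1 len1) m2 len2.
Proof.
  revert m1; induction len1 as [|len1 IH]; intros m1; simpl.
  - rewrite sum_range_const; lra.
  - now rewrite IH, <- sum_range_plus.
Qed.

Lemma sum_range_telescope_le f g m len :
  (forall i, (m <= i < m + len)%nat -> f i <= g (S i) - g i) ->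
  sum_range f m len <= g (m + len)%nat - g m.
Proof.
  revert m; induction len as [|len IH]; intros m H; simpl.
  - rewrite Nat.add_0_r; lra.
  - specialize (H m ltac:(lia)) as Hm.
    specialize (IH (S m) ltac:(intros; apply H; lia)).
    replace (m + S len)%nat with (S m + len)%nat by lia. lra.
Qed.

Lemma sum_range_truncate_above f j m len : (m <= S j <= m + len)%nat ->
  sum_range (fun i => if (i <=? j)%nat then f i else 0) m len = sum_range f m (S j - m).
Proof.
  revert m; induction len as [|len IH]; intros m H.
  - now replace (S j - m)%nat with 0%nat by lia.
  - cbn [sum_range]. destruct (Nat.leb_spec m j).
    + replace (S j - m)%nat with (S (S j - S m)) by lia. cbn [sum_range].
      rewrite IH by lia. reflexivity.
    + replace (S j - m)%nat with 0%nat by lia. cbn [sum_range].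
      rewrite (sum_range_ext _ (fun _ => 0)), sum_range_const
        by (intros i Hi; destruct (Nat.leb_spec i j); [lia|auto]).
      lra.
Qed.

Lemma sum_range_truncate_below f j m len : (j <= m + len)%nat ->
  sum_range (fun r => if (j <=? r)%nat then f r else 0) m len =
  sum_range f (Nat.max j m) (m + len - Nat.max j m).
Proof.
  revert m; induction len as [|len IH]; intros m H.
  - now replace (m + 0 - Nat.max j m)%nat with 0%nat by lia.
  - cbn [sum_range]. rewrite IH by lia. destruct (Nat.leb_spec j m).
    + replace (Nat.max j m) with m by lia. replace (Nat.max j (S m)) with (S m) by lia.
      replace (m + S len - m)%nat with (S len) by lia.
      replace (S m + len - S m)%nat with len by lia. reflexivity.
    + replace (Nat.max j (S m)) with (Nat.max j m) by lia.
      replace (m + S len)%nat with (S m + len)%nat by lia. lra.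
Qed.

Definition phi_upto (k rho : nat) (s : nat -> R) : R :=
  sum_from_to (fun r => Rmin (INR r ^ 2 / 4) (sum_from_to (fun i => INR i * s i) 1 r)) rho k.

Lemma sum_from_to_exchange (w a : nat -> R) rho k :
  sum_from_to (fun r => w r * sum_from_to a 1 r) rho k =
  sum_from_to (fun i => a i * sum_from_to w (Nat.max i rho) k) 1 k.
Proof.
  unfold sum_from_to.
  transitivity (sum_range (fun r => sum_range
      (fun i => w r * (if (i <=? r)%nat then a i else 0)) 1 k) rho (S k - rho)).
  { apply sum_range_ext. intros r Hr.
    rewrite sum_range_scal_l, sum_range_truncate_above by lia. reflexivity. }
  rewrite sum_range_swap. replace (S k - 1)%nat with k by lia.
  apply sum_range_ext. intros i Hi.
  rewrite (sum_range_ext _ (fun r => a i * (if (i <=? r)%nat then w r else 0)))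
    by (intros r _; destruct (i <=? r)%nat; ring).
  rewrite sum_range_scal_l, sum_range_truncate_below by lia.
  do 2 f_equal. lia.
Qed.

Lemma Rmin_le_convex a b t : 0 <= t <= 1 -> Rmin a b <= (1 - t) * a + t * b.
Proof.
  intros Ht. pose proof (Rmin_l a b). pose proof (Rmin_r a b). nra.
Qed.

Lemma phi_upto_le_dual k rho s (w : nat -> R) C :
  (rho <= k)%nat -> (forall i, (1 <= i <= k)%nat -> 0 <= s i) ->
  sum_from_to s 1 k <= INR rho ->
  (forall r, (rho <= r <= k)%nat -> 0 <= w r <= 1) ->
  (forall j, (rho <= j <= k)%nat -> INR j * sum_from_to w j k <= C) ->
  phi_upto k rho s <= sum_from_to (fun r => (1 - w r) * (INR r ^ 2 / 4)) rho k + INR rho * C.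
Proof.
  intros Hrk Hs Hsum Hw HC.
  assert (Htail_nonneg : forall j, (rho <= j)%nat -> 0 <= sum_from_to w j k).
  { intros j Hj. apply sum_range_nonneg. intros r Hr. apply Hw. lia. }
  assert (HCi : forall i, (1 <= i <= k)%nat -> INR i * sum_from_to w (Nat.max i rho) k <= C).
  { intros i Hi.
    pose proof (Htail_nonneg (Nat.max i rho) ltac:(lia)).
    pose proof (le_INR i (Nat.max i rho) ltac:(lia)).
    pose proof (HC (Nat.max i rho) ltac:(lia)). nra. }
  assert (HC0 : 0 <= C).
  { pose proof (Htail_nonneg rho (le_n rho)). pose proof (pos_INR rho).
    pose proof (HC rho ltac:(lia)). nra. }
  unfold phi_upto.
  apply Rle_trans with (sum_from_to (fun r => (1 - w r) * (INR r ^ 2 / 4)) rho k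
    + sum_from_to (fun r => w r * sum_from_to (fun i => INR i * s i) 1 r) rho k).
  { unfold sum_from_to. rewrite <- sum_range_plus.
    apply sum_range_le. intros r Hr. apply Rmin_le_convex, Hw. lia. }
  rewrite sum_from_to_exchange. apply Rplus_le_compat_l.
  apply Rle_trans with (sum_from_to (fun i => C * s i) 1 k).
  - apply sum_range_le. intros i Hi.
    pose proof (HCi i ltac:(lia)). pose proof (Hs i ltac:(lia)). nra.
  - unfold sum_from_to in *. rewrite sum_range_scal_l. nra.
Qed.

Lemma sum_range_squares_le m len :
  sum_range (fun r => INR r ^ 2 / 4) m len <= (INR (m + len) ^ 3 - INR m ^ 3) / 12.
Proof.
  replace ((INR (m + len) ^ 3 - INR m ^ 3) / 12)
    with (INR (m + len) ^ 3 / 12 - INR m ^ 3 / 12) by field.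
  apply (sum_range_telescope_le _ (fun r => INR r ^ 3 / 12)).
  intros r _. rewrite S_INR. pose proof (pos_INR r). nra.
Qed.

Lemma phi_upto_le_cubes k rho s : (rho <= S k)%nat ->
  phi_upto k rho s <= ((INR k + 1) ^ 3 - INR rho ^ 3) / 12.
Proof.
  intros Hrk. unfold phi_upto, sum_from_to.
  eapply Rle_trans; [apply (sum_range_le _ (fun r => INR r ^ 2 / 4)); intros; apply Rmin_l|].
  eapply Rle_trans; [apply sum_range_squares_le|].
  replace (rho + (S k - rho))%nat with (S k) by lia. rewrite S_INR. lra.
Qed.

(* M / (B + 1/2) = k - B: the telescoped tail M / (j - 1/2) - M / (B + 1/2) of the
   weights M / r^2 exactly absorbs the k - B unit weights above the cut. *)
Definition cut_mass (k B : nat) : R := (INR k - INR B) * (INR B + / 2).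

Definition cut_weight (k B r : nat) : R :=
  if (r <=? B)%nat then cut_mass k B / INR r ^ 2 else 1.

Lemma inv_sq_le_telescope r : 1 <= r -> / r ^ 2 <= / (r - / 2) - / (r + / 2).
Proof.
  intros Hr.
  replace (/ (r - / 2) - / (r + / 2)) with (/ (r ^ 2 - / 4)) by (field; repeat split; nra).
  apply Rinv_le_contravar; nra.
Qed.

Section CutWeights.

Variables k rho B : nat.
Hypotheses (Hrho : (1 <= rho)%nat) (HrB : (rho <= B)%nat) (HBk : (B <= k)%nat)
  (HkB : (k <= 2 * B + 1)%nat) (HM : cut_mass k B <= INR rho ^ 2).

Local Notation M := (cut_mass k B).
Local Notation w := (cut_weight k B).

Lemma cut_mass_nonneg : 0 <= M.
Proof.
  unfold cut_mass. pose proof (le_INR B k HBk). pose proof (pos_INR B).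
  apply Rmult_le_pos; lra.
Qed.

Lemma cut_weight_bounded r : (rho <= r)%nat -> 0 <= w r <= 1.
Proof.
  intros Hr. unfold cut_weight. destruct (Nat.leb_spec r B); [|lra].
  pose proof cut_mass_nonneg. pose proof (le_INR rho r Hr).
  pose proof (le_INR 1 rho Hrho). simpl in *.
  assert (INR rho ^ 2 <= INR r ^ 2) by (apply pow_incr; lra).
  split.
  - apply Rmult_le_pos; [lra | apply Rlt_le, Rinv_0_lt_compat; nra].
  - apply Rmult_le_reg_r with (INR r ^ 2); [nra|].
    unfold Rdiv. rewrite Rmult_assoc, Rinv_l by nra. lra.
Qed.

Lemma cut_weight_tail_below j : (rho <= j <= B)%nat ->
  INR j * sum_from_to w j k <= M + M / INR rho.
Proof.
  intros Hj. pose proof cut_mass_nonneg.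
  pose proof (le_INR rho j ltac:(lia)) as Hrj.
  pose proof (le_INR 1 rho Hrho) as H1rho. simpl in H1rho.
  assert (Hsplit : sum_from_to w j k
    = sum_range (fun r => M / INR r ^ 2) j (S B - j) + (INR k - INR B)).
  { unfold sum_from_to. replace (S k - j)%nat with ((S B - j) + (k - B))%nat by lia.
    rewrite sum_range_split, <- minus_INR by lia.
    rewrite (sum_range_ext w (fun _ => 1) (j + (S B - j))), sum_range_const
      by (intros r Hr; unfold cut_weight; destruct (Nat.leb_spec r B); [lia | auto]).
    rewrite (sum_range_ext w (fun r => M / INR r ^ 2))
      by (intros r Hr; unfold cut_weight; destruct (Nat.leb_spec r B); [auto | lia]).
    lra. }
  assert (Htele : sum_range (fun r => M / INR r ^ 2) j (S B - j)
    <= M / (INR j - / 2) - M / (INR B + / 2)).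
  { replace (M / (INR j - / 2) - M / (INR B + / 2))
      with (- M / (INR (j + (S B - j)) - / 2) - - M / (INR j - / 2))
      by (replace (j + (S B - j))%nat with (S B) by lia; rewrite S_INR;
          pose proof (pos_INR B); field; repeat split; lra).
    apply (sum_range_telescope_le _ (fun r => - M / (INR r - / 2))).
    intros r Hr. rewrite S_INR.
    pose proof (le_INR 1 r ltac:(lia)) as H1r. simpl in H1r.
    replace (- M / (INR r + 1 - / 2) - - M / (INR r - / 2))
      with (M * (/ (INR r - / 2) - / (INR r + / 2))) by (field; repeat split; lra).
    unfold Rdiv. apply Rmult_le_compat_l; [lra | now apply inv_sq_le_telescope]. }
  assert (Hmatch : M / (INR B + / 2) = INR k - INR B).
  { unfold cut_mass. pose proof (pos_INR B). field; repeat split; lra. }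
  rewrite Hsplit.
  apply Rle_trans with (INR j * (M / (INR j - / 2))); [apply Rmult_le_compat_l; lra|].
  replace (INR j * (M / (INR j - / 2))) with (M + M / (2 * INR j - 1))
    by (field; repeat split; lra).
  apply Rplus_le_compat_l, Rmult_le_compat_l; [lra|].
  apply Rinv_le_contravar; lra.
Qed.

Lemma cut_weight_tail_above j : (B < j <= k)%nat ->
  INR j * sum_from_to w j k <= M + (INR k - INR B) / 2.
Proof.
  intros Hj. unfold sum_from_to.
  rewrite (sum_range_ext w (fun _ => 1))
    by (intros r Hr; unfold cut_weight; destruct (Nat.leb_spec r B); [lia | auto]).
  rewrite sum_range_const, minus_INR, S_INR by lia.
  pose proof (le_INR (S B) j ltac:(lia)) as Hj_cut. rewrite S_INR in Hj_cut.
  pose proof (le_INR (k - B) j ltac:(lia)) as Hj_gap. rewrite minus_INR in Hj_gap by lia.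
  assert (0 <= (INR j - (INR B + 1)) * (INR j - (INR k - INR B))) by (apply Rmult_le_pos; lra).
  unfold cut_mass. nra.
Qed.

Lemma cut_weight_cost :
  sum_from_to (fun r => (1 - w r) * (INR r ^ 2 / 4)) rho k
  <= ((INR B + 1) ^ 3 - INR rho ^ 3) / 12 - M * (INR B + 1 - INR rho) / 4.
Proof.
  unfold sum_from_to. replace (S k - rho)%nat with ((S B - rho) + (k - B))%nat by lia.
  rewrite sum_range_split, (sum_range_ext _ (fun _ => 0) (rho + (S B - rho))), sum_range_const
    by (intros r Hr; unfold cut_weight; destruct (Nat.leb_spec r B); [lia | ring]).
  rewrite (sum_range_ext _ (fun r => INR r ^ 2 / 4 + - M / 4)).
  2:{ intros r Hr. unfold cut_weight. destruct (Nat.leb_spec r B); [|lia].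
      pose proof (le_INR 1 r ltac:(lia)) as H1r. simpl in H1r. field; repeat split; lra. }
  rewrite sum_range_plus, sum_range_const, minus_INR, S_INR by lia.
  pose proof (sum_range_squares_le rho (S B - rho)) as Hsq.
  replace (rho + (S B - rho))%nat with (S B) in Hsq by lia. rewrite S_INR in Hsq.
  lra.
Qed.

Lemma phi_upto_le_cut s : (forall i, (1 <= i <= k)%nat -> 0 <= s i) ->
  sum_from_to s 1 k <= INR rho ->
  phi_upto k rho s <= ((INR B + 1) ^ 3 - INR rho ^ 3) / 12 - M * (INR B + 1 - INR rho) / 4
    + INR rho * (M + (INR k - INR B) / 2) + M.
Proof.
  intros Hs Hsum. pose proof cut_mass_nonneg. pose proof (le_INR 1 rho Hrho). simpl in *.
  pose proof (le_INR B k HBk).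
  eapply Rle_trans.
  { apply (phi_upto_le_dual k rho s w (M + (INR k - INR B) / 2 + M / INR rho)); try lia; auto.
    - intros r Hr. apply cut_weight_bounded. lia.
    - intros j Hj.
      assert (0 <= M / INR rho)
        by (apply Rmult_le_pos; [lra | apply Rlt_le, Rinv_0_lt_compat; lra]).
      destruct (Nat.le_gt_cases j B).
      + pose proof (cut_weight_tail_below j ltac:(lia)). lra.
      + pose proof (cut_weight_tail_above j ltac:(lia)). lra. }
  pose proof cut_weight_cost.
  replace (INR rho * (M + (INR k - INR B) / 2 + M / INR rho))
    with (INR rho * (M + (INR k - INR B) / 2) + M) by (field; repeat split; lra).
  lra.
Qed.

End CutWeights.

Lemma cubic_profile_mono x z y : 0 <= y -> y / 2 <= x -> x <= z ->
  x ^ 3 / 3 - y * x ^ 2 / 4 <= z ^ 3 / 3 - y * z ^ 2 / 4.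
Proof.
  intros Hy Hx Hxz.
  assert (Hfac : z ^ 3 / 3 - y * z ^ 2 / 4 - (x ^ 3 / 3 - y * x ^ 2 / 4)
    = (z - x) * ((x ^ 2 + x * z + z ^ 2) / 3 - y * (x + z) / 4)) by field.
  assert (0 <= (x ^ 2 + x * z + z ^ 2) / 3 - y * (x + z) / 4) by nra.
  assert (0 <= (z - x) * ((x ^ 2 + x * z + z ^ 2) / 3 - y * (x + z) / 4))
    by (apply Rmult_le_pos; lra).
  lra.
Qed.

Lemma am_gm_3 a b : 0 <= a -> 0 <= b -> 3 * (a ^ 2 * b) <= b ^ 3 + 2 * a ^ 3.
Proof.
  intros Ha Hb.
  assert (0 <= (b - a) ^ 2 * (b + 2 * a)) by (apply Rmult_le_pos; [apply pow2_ge_0 | lra]).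
  nra.
Qed.

(* 125000/1597536 y^3 = A^3/6 + z^3/3 - y z^2/4 with A = 50y/129 and z = 125y/129:
   AM-GM bounds the dependence on p against A, monotonicity that on x by its value at z. *)
Lemma cut_value_le x y p : 21 <= y -> 129 * x <= 125 * y -> 125 * y < 129 * x + 129 ->
  5 * y < 16 * p -> 5 * p < 2 * y ->
  let M := (y - x) * (x + / 2) in
  ((x + 1) ^ 3 - p ^ 3) / 12 - M * (x + 1 - p) / 4 + p * (M + (y - x) / 2) + M
  <= 125000 / 1597536 * y ^ 3 + 5 * (y + 1) ^ 2.
Proof.
  intros Hy Hxy Hyx Hyp Hpy M.
  set (A := 50 * y / 129).
  pose proof (cubic_profile_mono x (125 / 129 * y) y ltac:(lra) ltac:(lra) ltac:(lra)) as Hcub.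
  pose proof (am_gm_3 A p ltac:(unfold A; lra) ltac:(lra)) as Hamgm.
  assert (HM0 : 0 <= M) by (unfold M; apply Rmult_le_pos; lra).
  assert (HMA : 5 * M <= A ^ 2 + 5 * (y + 1)).
  { assert (M <= (4 * y + 129) / 129 * (125 * y / 129 + / 2))
      by (unfold M; apply Rmult_le_compat; lra).
    unfold A. nra. }
  assert (E : ((x + 1) ^ 3 - p ^ 3) / 12 - M * (x + 1 - p) / 4 + p * (M + (y - x) / 2) + M
    = (x ^ 3 / 3 - y * x ^ 2 / 4) - (y - x) * x / 8 + (3 * x ^ 2 + 3 * x + 1) / 12
      - p ^ 3 / 12 + 5 * p * M / 4 + 3 * M / 4 + p * (y - x) / 2) by (unfold M; field).
  rewrite E.
  assert (A ^ 3 / 6 + (125 / 129 * y) ^ 3 / 3 - y * (125 / 129 * y) ^ 2 / 4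
    = 125000 / 1597536 * y ^ 3) by (unfold A; field).
  assert (5 * p * M <= p * A ^ 2 + 5 * p * (y + 1)) by nra.
  assert (M <= y * (y + 1)) by (unfold M; apply Rmult_le_compat; lra).
  assert (0 <= (y - x) * x) by (apply Rmult_le_pos; lra).
  assert (p * (y - x) <= y * (y + 1)) by (apply Rmult_le_compat; lra).
  assert (x ^ 2 <= y ^ 2) by nra.
  assert (p * (y + 1) <= y * (y + 1)) by nra.
  nra.
Qed.

Definition phi_bound (k : nat) : R := 125000 / 1597536 * INR k ^ 3 + 5 * (INR k + 1) ^ 2.

(* Coefficients appear as IZR (Z.of_nat _) so that simpl turns them into numerals. *)
Lemma le_INR_mul a b x y : (a * x <= b * y)%nat ->
  IZR (Z.of_nat a) * INR x <= IZR (Z.of_nat b) * INR y.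
Proof. intros H. rewrite <- !INR_IZR_INZ, <- !mult_INR. now apply le_INR. Qed.

Lemma lt_INR_mul a b x y : (a * x < b * y)%nat ->
  IZR (Z.of_nat a) * INR x < IZR (Z.of_nat b) * INR y.
Proof. intros H. rewrite <- !INR_IZR_INZ, <- !mult_INR. now apply lt_INR. Qed.

Section Bounds.

Variables (k rho : nat) (s : nat -> R).
Hypotheses (Hrho : (1 <= rho <= k)%nat) (Hs : forall i, (1 <= i <= k)%nat -> 0 <= s i)
  (Hsum : sum_from_to s 1 k <= INR rho).

Lemma phi_upto_bound_small_k : (k <= 20)%nat -> phi_upto k rho s <= phi_bound k.
Proof.
  intros Hk. eapply Rle_trans; [apply phi_upto_le_cubes; lia|].
  pose proof (le_INR_mul 1 20 k 1 ltac:(lia)) as Hk'. simpl in Hk'.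
  pose proof (pos_INR k). pose proof (pos_INR rho).
  assert (0 <= INR rho ^ 3) by (apply pow_le; lra).
  unfold phi_bound. nra.
Qed.

Lemma phi_upto_bound_large_rho : (2 * k <= 5 * rho)%nat -> phi_upto k rho s <= phi_bound k.
Proof.
  intros Hkr. eapply Rle_trans; [apply phi_upto_le_cubes; lia|].
  pose proof (le_INR_mul 2 5 k rho Hkr) as Hkr'. simpl in Hkr'.
  pose proof (pos_INR k).
  assert ((2 / 5 * INR k) ^ 3 <= INR rho ^ 3) by (apply pow_incr; lra).
  unfold phi_bound. nra.
Qed.

Lemma phi_upto_bound_small_rho : (16 * rho <= 5 * k)%nat -> phi_upto k rho s <= phi_bound k.
Proof.
  intros Hkr. pose proof (le_INR_mul 16 5 rho k Hkr) as Hkr'. simpl in Hkr'.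
  pose proof (pos_INR k).
  eapply Rle_trans.
  { apply (phi_upto_le_dual k rho s (fun _ => 1) ((INR k + 1) ^ 2 / 4)); try lia; auto.
    - intros; lra.
    - intros j Hj. unfold sum_from_to.
      rewrite sum_range_const, minus_INR, S_INR by lia.
      assert (0 <= (INR k + 1 - 2 * INR j) ^ 2) by apply pow2_ge_0. nra. }
  unfold sum_from_to. rewrite (sum_range_ext _ (fun _ => 0)), sum_range_const by (intros; ring).
  unfold phi_bound. nra.
Qed.

Lemma phi_upto_bound_mid_rho :
  (21 <= k)%nat -> (5 * rho < 2 * k)%nat -> (5 * k < 16 * rho)%nat ->
  phi_upto k rho s <= phi_bound k.
Proof.
  intros Hk Hr1 Hr2.
  set (B := (125 * k / 129)%nat).
  assert (HB1 : (129 * B <= 125 * k)%nat) by (apply Nat.Div0.mul_div_le).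
  assert (HB2 : (125 * k < 129 * B + 129)%nat).
  { pose proof (Nat.div_mod_eq (125 * k) 129) as Hdiv.
    pose proof (Nat.mod_upper_bound (125 * k) 129 ltac:(lia)).
    fold B in Hdiv. lia. }
  pose proof (le_INR_mul 129 125 B k HB1) as R1. simpl in R1.
  pose proof (lt_INR_mul 125 129 k (S B) ltac:(lia)) as R2. rewrite S_INR in R2. simpl in R2.
  pose proof (lt_INR_mul 5 16 k rho Hr2) as R3. simpl in R3.
  pose proof (lt_INR_mul 5 2 rho k Hr1) as R4. simpl in R4.
  pose proof (le_INR_mul 21 1 1 k ltac:(lia)) as R5. simpl in R5.
  pose proof (pos_INR B).
  assert (HM : cut_mass k B <= INR rho ^ 2).
  { unfold cut_mass.
    assert ((INR k - INR B) * (INR B + / 2) <= (4 * INR k + 129) / 129 * INR k)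
      by (apply Rmult_le_compat; lra).
    nra. }
  eapply Rle_trans; [apply (phi_upto_le_cut k rho B); auto; lia|].
  unfold cut_mass, phi_bound.
  apply (cut_value_le (INR B) (INR k) (INR rho)); lra.
Qed.

End Bounds.

Lemma phi_upto_le_bound k rho s : (1 <= rho <= k)%nat ->
  (forall i, (1 <= i <= k)%nat -> 0 <= s i) -> sum_from_to s 1 k <= INR rho ->
  phi_upto k rho s <= phi_bound k.
Proof.
  intros Hrho Hs Hsum.
  destruct (Nat.le_gt_cases k 20); [now apply phi_upto_bound_small_k|].
  destruct (Nat.le_gt_cases (2 * k) (5 * rho)); [now apply phi_upto_bound_large_rho|].
  destruct (Nat.le_gt_cases (16 * rho) (5 * k)); [now apply phi_upto_bound_small_rho|].
  apply phi_upto_bound_mid_rho; auto; lia.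
Qed.

Lemma Un_cv_quadratic_over_cubic c : Un_cv (fun n => c * INR n ^ 2 / INR n ^ 3) 0.
Proof.
  intros eps Heps.
  destruct (INR_archimed eps (Rabs c) Heps) as [N HN].
  exists (S N). intros n Hn. unfold R_dist.
  pose proof (le_INR (S N) n ltac:(lia)) as HNn. rewrite S_INR in HNn.
  pose proof (pos_INR N).
  replace (c * INR n ^ 2 / INR n ^ 3 - 0) with (c / INR n) by (field; lra).
  unfold Rdiv. rewrite Rabs_mult, Rabs_inv, (Rabs_pos_eq (INR n)) by lra.
  apply Rmult_lt_reg_r with (INR n); [lra|].
  rewrite Rmult_assoc, Rinv_l by lra. nra.
Qed.

Theorem proposition7 :
  exists f : nat -> R,
    Un_cv (fun n => f n / INR n ^ 3) 0 /\
    forall (n rho : nat) (s : nat -> R),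
      (0 < n)%nat -> (0 < rho)%nat -> 2 * INR rho < INR n ->
      (forall i, (1 <= i <= Nat.div2 n)%nat -> 0 <= s i) ->
      sum_from_to s 1 (Nat.div2 n) <= INR rho ->
      phi n rho s <= 15625 * INR n ^ 3 / 1597536 + f n.
Proof.
  exists (fun n => 12 * INR n ^ 2). split; [apply Un_cv_quadratic_over_cubic|].
  intros n rho s Hn Hrho Hrn Hs Hsum.
  pose proof (Nat.div2_odd n) as Hdiv2.
  set (k := Nat.div2 n) in *.
  assert (Hkn : (2 * k <= n <= 2 * k + 1)%nat) by (destruct (Nat.odd n); simpl in Hdiv2; lia).
  assert (Hrk : (rho <= k)%nat).
  { enough (2 * rho < n)%nat by lia. apply INR_lt. rewrite mult_INR. simpl. lra. }
  change (phi n rho s) with (phi_upto k rho s).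
  eapply Rle_trans; [apply phi_upto_le_bound; auto; lia|].
  pose proof (le_INR_mul 2 1 k n ltac:(lia)) as H2k. simpl in H2k.
  pose proof (le_INR_mul 1 1 1 n ltac:(lia)) as H1n. simpl in H1n.
  pose proof (pos_INR k).
  assert ((2 * INR k) ^ 3 <= INR n ^ 3) by (apply pow_incr; lra).
  unfold phi_bound. nra.
Qed.
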